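(* Let $\Phi:\mathbb{R}^N\to\mathbb{R}^M$ and $L:\mathbb{R}^P\to\mathbb{R}^N$ be linear operators, let $\|\cdot\|_A$ be a norm on $\mathbb{R}^P$ with dual norm $\|\cdot\|_A^*$, and set $R(x)=\|L^*x\|_A$. Let $y\in\mathbb{R}^M$, $\lambda>0$, and let $x^\star$ be a minimizer of $\min_{x\in\mathbb{R}^N}\tfrac12\|y-\Phi x\|_2^2+\lambda R(x)$. Assume $\|\cdot\|_A$ is decomposable at $u^\star=L^*x^\star$ with associated subspace $T$ and vector $e\in T$, let $S=T^\perp$, and assume moreover that $\|\cdot\|_A$ is separable on $S=V\oplus W$ for subspaces $V,W$. Assume that there exist $\eta\in\mathbb{R}^M$ and $\alpha\in\partial\|\cdot\|_A(L^*x^\star)$ with $\Phi^*\eta=L\alpha$ and $\|\alpha_V\|_A^*<1$, and that $\Phi$ is injective on $\ker(L_V^* )$. Then $x^\star$ is the unique minimizer of this problem.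
   Context: For a subspace $V\subset\mathbb{R}^P$, $P_V$ denotes the orthogonal projector onto $V$, and $L_V=LP_V$, $L_V^*=P_VL^*$, $\alpha_V=P_V\alpha$ for $\alpha\in\mathbb{R}^P$. A norm $\|\cdot\|_A$ on $\mathbb{R}^P$ is decomposable at $u\in\mathbb{R}^P$ if (i) there exist a subspace $T\subset\mathbb{R}^P$ and a vector $e\in T$ such that $\partial\|\cdot\|_A(u)=\{\alpha\in\mathbb{R}^P:\ \alpha_T=e,\ \|\alpha_{T^\perp}\|_A^*\le 1\}$, and (ii) for every $z\in T^\perp$, $\|z\|_A=\sup\{\langle v,z\rangle: v\in T^\perp,\ \|v\|_A^*\le 1\}$. The decomposable norm is separable on $T^\perp=S=V\oplus W$ if $\|u_{T^\perp}\|_A=\|u_V\|_A+\|u_W\|_A$ for all $u\in\mathbb{R}^P$. *)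

From mathcomp Require Import all_boot all_order all_algebra.
From mathcomp Require Import boolp classical_sets reals.
Set Implicit Arguments. Unset Strict Implicit. Unset Printing Implicit Defensive.
Import Order.TTheory GRing.Theory Num.Theory.
Local Open Scope ring_scope.
Local Open Scope classical_set_scope.

Section Defs.
Variable R : realType.

(* Vectors of R^P are column vectors 'cV[R]_P; linear operators are matrices,
   applied by left multiplication; the adjoint is the transpose. *)

Definition dotv (P : nat) (a b : 'cV[R]_P) : R := \sum_(i < P) a i 0 * b i 0.
Definition sqnorm2 (P : nat) (a : 'cV[R]_P) : R := \sum_(i < P) a i 0 ^+ 2.

Definition is_norm (P : nat) (nA : 'cV[R]_P -> R) : Prop :=
  [/\ forall x, nA x = 0 -> x = 0,
      forall (c : R) x, nA (c *: x) = `|c| * nA x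
    & forall x y, nA (x + y) <= nA x + nA y].

Definition dual_norm (P : nat) (nA : 'cV[R]_P -> R) (a : 'cV[R]_P) : R :=
  sup [set dotv a x | x in [set x | nA x <= 1]].

Definition subdiff (P : nat) (f : 'cV[R]_P -> R) (u : 'cV[R]_P) : set 'cV[R]_P :=
  [set a | forall z, f u + dotv a (z - u) <= f z].

(* Subspaces of R^P are represented (mxalgebra style) as row spaces of
   square matrices 'M_P; a column vector x lies in U iff (x^T <= U)%MS. *)
Definition inspace (P : nat) (U : 'M[R]_P) (x : 'cV[R]_P) : bool := (x^T <= U)%MS.

Definition perp (P : nat) (U : 'M[R]_P) : 'M[R]_P := kermx U^T.

Definition proj (P : nat) (U : 'M[R]_P) : 'M[R]_P :=
  let B := row_base U in B^T *m invmx (B *m B^T) *m B.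

Definition decomposable_at (P : nat) (nA : 'cV[R]_P -> R) (u : 'cV[R]_P)
    (T : 'M[R]_P) (e : 'cV[R]_P) : Prop :=
  [/\ inspace T e,
      subdiff nA u =
        [set a | proj T *m a = e /\ dual_norm nA (proj (perp T) *m a) <= 1]
    & forall z, inspace (perp T) z ->
        nA z = sup [set dotv v z | v in
                     [set v | inspace (perp T) v /\ dual_norm nA v <= 1]]].

Definition separable_on (P : nat) (nA : 'cV[R]_P -> R) (S V W : 'M[R]_P) : Prop :=
  [/\ (V + W :=: S)%MS, (V :&: W)%MS = 0
    & forall u, nA (proj S *m u) = nA (proj V *m u) + nA (proj W *m u)].

Definition objective (M N P : nat) (Phi : 'M[R]_(M, N)) (L : 'M[R]_(N, P))
    (nA : 'cV[R]_P -> R) (y : 'cV[R]_M) (lambda : R) (x : 'cV[R]_N) : R :=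
  2^-1 * sqnorm2 (y - Phi *m x) + lambda * nA (L^T *m x).

Definition is_minimizer (N : nat) (J : 'cV[R]_N -> R) (x : 'cV[R]_N) : Prop :=
  forall z, J x <= J z.

End Defs.

(* The objective is strictly convex in [Phi x], so all minimizers share the
   fit [Phi x] and hence also the value of the regularizer [nA (L^T x)].
   The dual certificate [alpha] is a subgradient at [L^T xs] with
   [L alpha = Phi^T eta]; since [Phi] agrees on two minimizers, [alpha] is
   also tight at every minimizer: [<alpha, L^T x> = nA (L^T x)].
   Decomposability bounds [nA (P_S v)] by [<P_S alpha, v>] for any such tight
   [v], and separability splits [nA (P_S v)] into [nA (P_V v) + nA (P_W v)];
   as [P_V alpha] has dual norm [< 1], this forces [P_V v = 0].  So every
   minimizer lies in [ker (P_V L^T)], where [Phi] is injective. *)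
From mathcomp Require Import all_boot all_order all_algebra.
From mathcomp Require Import boolp classical_sets reals ring lra.
From mathcomp Require Import topology normedtype matrix_normedtype derive.
Import Order.TTheory GRing.Theory Num.Theory.
Import numFieldNormedType.Exports.
Set Implicit Arguments. Unset Strict Implicit. Unset Printing Implicit Defensive.
Local Open Scope ring_scope.
Local Open Scope classical_set_scope.

Section NormFacts.
Variables (R : realType) (P : nat) (nA : 'cV[R]_P -> R).
Hypothesis hn : is_norm nA.

Lemma nA0 : nA 0 = 0.
Proof. case: hn => _ hZ _; by rewrite -(scale0r (0 : 'cV[R]_P)) hZ normr0 mul0r. Qed.

Lemma nAZ (c : R) x : nA (c *: x) = `|c| * nA x.
Proof. by case: hn. Qed.

Lemma nAD x y : nA (x + y) <= nA x + nA y.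
Proof. by case: hn. Qed.

Lemma nA_eq0 x : (nA x == 0) = (x == 0).
Proof. case: hn => h0 _ _; apply/eqP/eqP => [/h0 // | ->]; exact: nA0. Qed.

Lemma nA_ge0 x : 0 <= nA x.
Proof.
have := nAD x (- x); rewrite subrr nA0 -scaleN1r nAZ normrN normr1 mul1r.
by rewrite -mulr2n pmulrn_lge0.
Qed.

Lemma nA_gt0 x : x != 0 -> 0 < nA x.
Proof. by move=> x0; rewrite lt_neqAle eq_sym nA_eq0 x0 nA_ge0. Qed.

Lemma nA_sum n (F : 'I_n -> 'cV[R]_P) : nA (\sum_i F i) <= \sum_i nA (F i).
Proof.
elim/big_ind2: _ => [|a b c d h1 h2|//]; first by rewrite nA0.
by apply: le_trans (nAD _ _) _; exact: lerD.
Qed.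

Lemma nA_le_coord_bound : exists K, forall (x : 'cV[R]_P) (c : R),
  (forall i, `|x i 0| <= c) -> nA x <= K * c.
Proof.
exists (\sum_(i < P) nA (delta_mx i 0)) => x c xc.
rewrite {1}(matrix_sum_delta x) mulr_suml.
apply: le_trans (nA_sum _) _; apply: ler_sum => i _.
by rewrite big_ord1 nAZ mulrC ler_wpM2l ?nA_ge0.
Qed.

Lemma continuous_nA_row : continuous (fun v : 'rV[R]_P => nA v^T).
Proof.
have [K hK] := nA_le_coord_bound.
have K0 : 0 < `|K| + 1 by rewrite ltr_wpDl.
have lip (a b : 'rV[R]_P) : `|nA a^T - nA b^T| <= (`|K| + 1) * `|a - b|.
  have half (a' b' : 'rV[R]_P) : nA a'^T - nA b'^T <= (`|K| + 1) * `|a' - b'|.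
    rewrite lerBlDl; have -> : a'^T = b'^T + (a' - b')^T by rewrite linearB addrC subrK.
    apply: le_trans (nAD _ _) _; rewrite lerD2l.
    apply: le_trans (hK _ `|a' - b'| _) _.
      move=> i; rewrite mxE [leRHS]/Num.norm /= mx_normrE.
      by apply/bigmax_geP; right; exists (ord0, i).
    by rewrite ler_wpM2r // (le_trans (ler_norm _)) // lerDl.
  by rewrite ler_norml half andbT lerNl opprB -normrN opprB half.
move=> v; apply/(@cvgrPdist_lt _ _ _ (nbhs v) (nbhs_filter v)) => eps e0.
near=> w; apply: le_lt_trans (lip v w) _; rewrite -ltr_pdivlMl //.
near: w; apply: cvgr_dist_lt; last by rewrite mulr_gt0 // invr_gt0.
exact: cvg_id.
Unshelve. all: by end_near.
Qed.

End NormFacts.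

(* The minimum of [nA] on the unit sphere of the max norm is positive by
   compactness. *)
Lemma coord_le_nA (R : realType) P (nA : 'cV[R]_P -> R) :
  is_norm nA -> exists2 c, 0 < c & forall (x : 'cV[R]_P) i, `|x i 0| <= c * nA x.
Proof.
case: P nA => [|p] nA hn; first by exists 1 => // x [].
have cnA := continuous_nA_row hn.
pose S := [set v : 'rV[R]_p.+1 | `|v| = 1].
have S0 : S !=set0.
  pose v : 'rV[R]_p.+1 := const_mx 1.
  have v0 : v != 0.
    by apply/eqP => /matrixP /(_ ord0 ord0) /eqP; rewrite !mxE oner_eq0.
  exists (`|v|^-1 *: v); rewrite /S /= normrZ normrV ?unitfE ?normr_eq0 //.
  by rewrite normr_id mulVf // normr_eq0.
have Scompact : compact S.
  apply: bounded_closed_compact.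
    rewrite /bounded_set /= /bounded_near; near=> M => v /= ->.
    near: M; exact: nbhs_pinfty_ge.
  apply: (@preimage_closed _ _ (fun v : 'rV[R]_p.+1 => `|v|) [set 1]); last exact: closed_eq.
  by move=> x _; exact: norm_continuous.
have [m mS mmin] := EVT_min_rV S0 Scompact (continuous_subspaceT cnA).
have m0 : 0 < nA m^T.
  apply: (nA_gt0 hn); apply: contraTneq mS; rewrite -trmx0 => /trmx_inj ->.
  by apply/negP; rewrite in_setE /S /= normr0 => /esym/eqP; rewrite oner_eq0.
exists (nA m^T)^-1 => [|x i]; first by rewrite invr_gt0.
have [->|x0] := eqVneq x 0; first by rewrite mxE normr0 (nA0 hn) mulr0.
have nx0 : 0 < `|x^T| by rewrite normr_gt0 -trmx0 (inj_eq trmx_inj).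
have := mmin (`|x^T|^-1 *: x^T).
rewrite inE /S /= normrZ normrV ?unitfE ?gt_eqF // normr_id mulVf ?gt_eqF // => /(_ erefl).
rewrite linearZ /= trmxK (nAZ hn) normrV ?unitfE ?gt_eqF // normr_id ler_pdivlMl // => hm.
apply: le_trans (_ : `|x^T| <= _); last by rewrite ler_pdivlMl // mulrC.
rewrite [leRHS]/Num.norm /= mx_normrE; apply/bigmax_geP; right.
by exists (ord0, i); rewrite //= mxE.
Unshelve. all: by end_near.
Qed.

Section Dot.
Variables (R : realType) (n : nat).
Implicit Types a b c : 'cV[R]_n.

Lemma dotvE a b : dotv a b = (a^T *m b) 0 0.
Proof. by rewrite /dotv mxE; apply: eq_bigr => i _; rewrite mxE. Qed.

Lemma dotvC a b : dotv a b = dotv b a.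
Proof. by apply: eq_bigr => i _; rewrite mulrC. Qed.

Lemma dotvDr a b c : dotv a (b + c) = dotv a b + dotv a c.
Proof. by rewrite /dotv -big_split; apply: eq_bigr => i _; rewrite mxE mulrDr. Qed.

Lemma dotvDl a b c : dotv (b + c) a = dotv b a + dotv c a.
Proof. by rewrite dotvC dotvDr !(dotvC a). Qed.

Lemma dotvZr (k : R) a b : dotv a (k *: b) = k * dotv a b.
Proof. by rewrite /dotv mulr_sumr; apply: eq_bigr => i _; rewrite mxE mulrCA. Qed.

Lemma dotvBr a b c : dotv a (b - c) = dotv a b - dotv a c.
Proof. by rewrite dotvDr -scaleN1r dotvZr mulN1r. Qed.

Lemma dotv0r a : dotv a 0 = 0.
Proof. by rewrite /dotv big1 // => i _; rewrite mxE mulr0. Qed.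

Lemma sqnorm2_ge0 a : 0 <= sqnorm2 a.
Proof. by apply: sumr_ge0 => i _; exact: sqr_ge0. Qed.

Lemma sqnorm2_eq0 a : sqnorm2 a = 0 -> a = 0.
Proof.
move=> a0; apply/colP => i; rewrite mxE; apply/eqP; rewrite -sqrf_eq0; apply/eqP.
by apply: (psumr_eq0P _ a0) => // j _; exact: sqr_ge0.
Qed.

Lemma sqnorm2_midpoint y a b :
  sqnorm2 (y - 2^-1 *: (a + b)) =
  2^-1 * sqnorm2 (y - a) + 2^-1 * sqnorm2 (y - b) - 2^-1 * 2^-1 * sqnorm2 (a - b).
Proof.
have sqr_midpoint (r s t : R) : (r - 2^-1 * (s + t)) ^+ 2 =
    2^-1 * (r - s) ^+ 2 + 2^-1 * (r - t) ^+ 2 - 2^-1 * 2^-1 * (s - t) ^+ 2.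
  by field.
rewrite /sqnorm2 !mulr_sumr -big_split -sumrB; apply: eq_bigr => i _.
by rewrite !mxE sqr_midpoint.
Qed.

End Dot.

Lemma dotv_mulmx (R : realType) m n (A : 'M[R]_(m, n)) (a : 'cV[R]_m) (b : 'cV[R]_n) :
  dotv a (A *m b) = dotv (A^T *m a) b.
Proof. by rewrite !dotvE trmx_mul trmxK mulmxA. Qed.

Lemma mulmx_trV_eq0 (R : realType) n (v : 'rV[R]_n) : v *m v^T = 0 -> v = 0.
Proof.
move=> /rowP /(_ 0); rewrite !mxE => vv0; apply/rowP => i; rewrite mxE.
apply/eqP; rewrite -sqrf_eq0; apply/eqP.
have sq0 : \sum_j v 0 j ^+ 2 = 0.
  by rewrite -[RHS]vv0; apply: eq_bigr => j _; rewrite mxE expr2.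
by apply: (psumr_eq0P _ sq0) => // j _; exact: sqr_ge0.
Qed.

Section Projection.
Variables (R : realType) (P : nat).
Implicit Types (U : 'M[R]_P) (z : 'cV[R]_P).

Lemma row_base_gram_unit U : row_base U *m (row_base U)^T \in unitmx.
Proof.
rewrite -row_free_unit -kermx_eq0; apply/rowV0P => w /sub_kermxP wG0.
have : (w *m row_base U) *m (w *m row_base U)^T = 0.
  by rewrite trmx_mul mulmxA -(mulmxA w) wG0 mul0mx.
by move/mulmx_trV_eq0/eqP; rewrite mulmx_free_eq0 ?row_base_free // => /eqP.
Qed.

Lemma projE U :
  proj U = (row_base U)^T *m invmx (row_base U *m (row_base U)^T) *m row_base U.
Proof. by []. Qed.

Lemma tr_proj U : (proj U)^T = proj U.
Proof.
rewrite projE; move: (row_base U) => B.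
by rewrite !trmx_mul trmxK trmx_inv trmx_mul trmxK mulmxA.
Qed.

Lemma row_base_proj U : row_base U *m proj U = row_base U.
Proof. by rewrite projE !mulmxA mulmxV ?row_base_gram_unit // mul1mx. Qed.

Lemma proj_id U k (A : 'M[R]_(P, k)) : (A^T <= U)%MS -> proj U *m A = A.
Proof.
rewrite -(eq_row_base U) => /submxP [D AD].
by apply: trmx_inj; rewrite trmx_mul tr_proj AD -mulmxA row_base_proj.
Qed.

Lemma proj_submx U k (A : 'M[R]_(P, k)) : ((proj U *m A)^T <= U)%MS.
Proof.
rewrite -(eq_row_base U) projE; move: (row_base U) => B.
by rewrite !trmx_mul trmxK !mulmxA submxMl.
Qed.

Lemma proj_sub_proj U X : (X <= U)%MS -> proj X *m proj U = proj X.
Proof.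
move=> XU; apply: trmx_inj; rewrite trmx_mul !tr_proj proj_id //.
by have := proj_submx X 1%:M; rewrite mulmx1 => /submx_trans; apply.
Qed.

Lemma inspace_proj U z : inspace U (proj U *m z).
Proof. exact: proj_submx. Qed.

Lemma proj_inspace U z : inspace U z -> proj U *m z = z.
Proof. exact: proj_id. Qed.

Lemma inspace_perpP U z : reflect (U *m z = 0) (inspace (perp U) z).
Proof.
apply: (iffP sub_kermxP) => [|Uz0]; last by rewrite -trmx_mul Uz0 trmx0.
by move=> zU0; rewrite -[_ *m _]trmxK trmx_mul zU0 trmx0.
Qed.

Lemma perp_mul_inspace U z : inspace U z -> perp U *m z = 0.
Proof.
by move=> /submxP [D zD]; rewrite -[z]trmxK zD trmx_mul mulmxA mulmx_ker mul0mx.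
Qed.

Lemma proj_ker U z : U *m z = 0 -> proj U *m z = 0.
Proof.
move=> Uz0; have /submxP [D BD] : (row_base U <= U)%MS by rewrite eq_row_base.
have Bz0 : row_base U *m z = 0 by rewrite BD -mulmxA Uz0 mulmx0.
rewrite projE; move: (row_base U) Bz0 => B Bz0.
by rewrite -!mulmxA Bz0 !mulmx0.
Qed.

Lemma proj_perp_inspace U z : inspace U z -> proj (perp U) *m z = 0.
Proof. by move=> /perp_mul_inspace; exact: proj_ker. Qed.

Lemma proj_add_proj_perp U z : proj U *m z + proj (perp U) *m z = z.
Proof.
have mx_proj : U *m proj U = U.
  have /submxP [D UD] : (U <= row_base U)%MS by rewrite eq_row_base.
  by rewrite {1}UD -mulmxA row_base_proj -UD.
set w := z - proj U *m z.
have wperp : inspace (perp U) w.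
  by apply/inspace_perpP; rewrite mulmxBr mulmxA mx_proj subrr.
have -> : proj (perp U) *m z = w.
  rewrite -{1}[z](subrK (proj U *m z)) -/w mulmxDr proj_inspace //.
  by rewrite proj_perp_inspace ?addr0 // inspace_proj.
by rewrite /w addrC subrK.
Qed.

End Projection.

Section Subdifferential.
Variables (R : realType) (P : nat) (nA : 'cV[R]_P -> R).
Hypothesis hn : is_norm nA.
Implicit Types (u v z a : 'cV[R]_P) (T V W : 'M[R]_P).

Lemma subdiff_norm_eq u a : subdiff nA u a -> dotv a u = nA u.
Proof.
move=> au; have := au 0; have := au (u + u).
rewrite addrK -mulr2n -scaler_nat (nAZ hn) normr_nat.
by rewrite (nA0 hn) sub0r -scaleN1r dotvZr; lra.
Qed.

Lemma subdiff_norm_le u a z : subdiff nA u a -> dotv a z <= nA z.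
Proof. by move=> au; have := au z; rewrite dotvBr (subdiff_norm_eq au); lra. Qed.

Lemma dotv_le_dual a z : dotv a z <= dual_norm nA a * nA z.
Proof.
have [c c0 hc] := coord_le_nA hn.
set E := [set dotv a x | x in [set x | nA x <= 1]].
have supE : has_sup E.
  split; first by exists (dotv a 0); exists 0; rewrite //= (nA0 hn).
  exists (c * \sum_i `|a i 0|) => _ [x /= x1 <-].
  rewrite /dotv mulr_sumr; apply: ler_sum => i _.
  apply: le_trans (ler_norm _) _; rewrite normrM mulrC ler_wpM2r //.
  by apply: le_trans (hc x i) _; rewrite ler_piMr // ltW.
have [->|z0] := eqVneq z 0; first by rewrite dotv0r (nA0 hn) mulr0.
have nz := nA_gt0 hn z0.
have Ez : E (dotv a ((nA z)^-1 *: z)).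
  exists ((nA z)^-1 *: z) => //=.
  by rewrite (nAZ hn) ger0_norm ?invr_ge0 ?(ltW nz) // mulVf ?gt_eqF.
by have := sup_upper_bound supE Ez; rewrite dotvZr ler_pdivrMl // mulrC.
Qed.

Lemma separable_projD S V W z :
  separable_on nA S V W -> proj S *m z = proj V *m z + proj W *m z.
Proof.
move=> [VWS _ sep].
have VS : (V <= S)%MS by rewrite -VWS addsmxSl.
have WS : (W <= S)%MS by rewrite -VWS addsmxSr.
have proj_other X Y a : (X <= S)%MS -> inspace X a ->
    nA (proj S *m a) = nA (proj X *m a) + nA (proj Y *m a) -> proj Y *m a = 0.
  move=> XS Xa; rewrite (proj_inspace (submx_trans Xa XS)) (proj_inspace Xa) => nAa.
  by apply/eqP; rewrite -(nA_eq0 hn); apply/eqP; lra.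
have /sub_addsmxP [[c d] /= zcd] : ((proj S *m z)^T <= V + W)%MS by rewrite VWS proj_submx.
have Va : inspace V (c *m V)^T by rewrite /inspace trmxK submxMl.
have Wb : inspace W (d *m W)^T by rewrite /inspace trmxK submxMl.
have PSz : proj S *m z = (c *m V)^T + (d *m W)^T.
  by apply: trmx_inj; rewrite zcd linearD /= !trmxK.
rewrite -(proj_sub_proj VS) -(proj_sub_proj WS) -(mulmxA (proj V)) -(mulmxA (proj W)).
rewrite PSz !mulmxDr (proj_inspace Va) (proj_inspace Wb).
rewrite (proj_other V W) // (proj_other W V) ?addr0 ?add0r //.
by rewrite addrC.
Qed.

Lemma decomposable_dot_le u T e a v :
  decomposable_at nA u T e -> subdiff nA u a -> dotv a v = nA v ->
  nA (proj (perp T) *m v) <= dotv a (proj (perp T) *m v).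
Proof.
move=> [Te subdiffE normE] au av.
have [PTa PSa] : proj T *m a = e /\ dual_norm nA (proj (perp T) *m a) <= 1.
  by move: au; rewrite subdiffE.
rewrite normE ?inspace_proj //; apply: ge_sup.
  exists (dotv (proj (perp T) *m a) (proj (perp T) *m v)), (proj (perp T) *m a) => //.
  by split; rewrite ?inspace_proj.
move=> _ [s [Ss s1] <-].
have es_sub : subdiff nA u (e + s).
  have Ts0 : proj T *m s = 0 by apply: proj_ker; apply/inspace_perpP.
  rewrite subdiffE /= !mulmxDr Ts0 addr0 (proj_inspace Te) (proj_perp_inspace Te).
  by rewrite (proj_inspace Ss) add0r.
have := subdiff_norm_le v es_sub.
rewrite -av -[in X in _ <= X -> _](proj_add_proj_perp T a) PTa !dotvDl lerD2l => sv.
by rewrite !dotv_mulmx !tr_proj proj_inspace.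
Qed.

Lemma tight_subgradient_projV_eq0 u T e V W a v :
  decomposable_at nA u T e -> separable_on nA (perp T) V W ->
  subdiff nA u a -> dual_norm nA (proj V *m a) < 1 ->
  dotv a v = nA v -> proj V *m v = 0.
Proof.
move=> dec sepVW au aV1 av.
have := decomposable_dot_le dec au av.
case: (sepVW) => _ _ ->; rewrite (separable_projD v sepVW) dotvDr.
have -> : dotv a (proj V *m v) = dotv (proj V *m a) (proj V *m v).
  by rewrite dotv_mulmx [RHS]dotv_mulmx !tr_proj (proj_inspace (inspace_proj V a)).
have := dotv_le_dual (proj V *m a) (proj V *m v).
have := subdiff_norm_le (proj W *m v) au.
have := nA_ge0 hn (proj V *m v).
move=> nV0 Wle Vle le; apply/eqP; rewrite -(nA_eq0 hn) eq_le nV0 andbT.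
by nra.
Qed.

End Subdifferential.

Section Objective.
Variables (R : realType) (M N P : nat) (Phi : 'M[R]_(M, N)) (L : 'M[R]_(N, P)).
Variables (nA : 'cV[R]_P -> R) (y : 'cV[R]_M) (lambda : R).
Hypotheses (hn : is_norm nA) (lambda_gt0 : 0 < lambda).
Implicit Types x : 'cV[R]_N.

Local Notation J := (objective Phi L nA y lambda).

Lemma objective_midpoint_le x1 x2 :
  J (2^-1 *: (x1 + x2)) <=
  2^-1 * J x1 + 2^-1 * J x2 - 2^-1 * 2^-1 * 2^-1 * sqnorm2 (Phi *m x1 - Phi *m x2).
Proof.
have convex_nA : lambda * nA (L^T *m (2^-1 *: (x1 + x2))) <=
    lambda * (2^-1 * nA (L^T *m x1) + 2^-1 * nA (L^T *m x2)).
  apply: ler_wpM2l; first exact: ltW.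
  rewrite -scalemxAr mulmxDr (nAZ hn) ger0_norm ?invr_ge0 ?ler0n // -mulrDr.
  by apply: ler_wpM2l; [rewrite invr_ge0 ler0n | exact: nAD].
move: convex_nA; rewrite /objective -!scalemxAr !mulmxDr sqnorm2_midpoint; lra.
Qed.

Lemma minimizer_fit x1 x2 : is_minimizer J x1 -> is_minimizer J x2 ->
  Phi *m x1 = Phi *m x2 /\ nA (L^T *m x1) = nA (L^T *m x2).
Proof.
move=> min1 min2.
have := objective_midpoint_le x1 x2; have := min1 (2^-1 *: (x1 + x2)).
have := min1 x2; have := min2 x1; have := sqnorm2_ge0 (Phi *m x1 - Phi *m x2).
move=> D0 J21 J12 Jmid; rewrite -/(J x1) -/(J x2) => midle.
have fit : Phi *m x1 = Phi *m x2.
  by apply/subr0_eq/sqnorm2_eq0; lra.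
split=> //; apply: (mulfI (lt0r_neq0 lambda_gt0)).
by move: J21 J12; rewrite /objective fit; lra.
Qed.

Lemma certificate_tight eta alpha xs x :
  subdiff nA (L^T *m xs) alpha -> Phi^T *m eta = L *m alpha ->
  Phi *m x = Phi *m xs -> nA (L^T *m x) = nA (L^T *m xs) ->
  dotv alpha (L^T *m x) = nA (L^T *m x).
Proof.
move=> alpha_sub alpha_eta fit nA_eq.
have : dotv alpha (L^T *m (x - xs)) = 0.
  by rewrite dotv_mulmx trmxK -alpha_eta -dotv_mulmx mulmxBr fit subrr dotv0r.
rewrite mulmxBr dotvBr (subdiff_norm_eq hn alpha_sub) nA_eq => /eqP.
by rewrite subr_eq0 => /eqP.
Qed.

End Objective.

Unset Implicit Arguments.

Theorem corollary2 (R : realType) (M N P : nat)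
    (Phi : 'M[R]_(M, N)) (L : 'M[R]_(N, P)) (nA : 'cV[R]_P -> R)
    (y : 'cV[R]_M) (lambda : R) (xs : 'cV[R]_N)
    (T V W : 'M[R]_P) (e : 'cV[R]_P) :
  is_norm nA ->
  0 < lambda ->
  is_minimizer (objective Phi L nA y lambda) xs ->
  decomposable_at nA (L^T *m xs) T e ->
  separable_on nA (perp T) V W ->
  (exists (eta : 'cV[R]_M) (alpha : 'cV[R]_P),
      subdiff nA (L^T *m xs) alpha /\
      Phi^T *m eta = L *m alpha /\
      dual_norm nA (proj V *m alpha) < 1) ->
  (forall x1 x2 : 'cV[R]_N,
      proj V *m (L^T *m x1) = 0 -> proj V *m (L^T *m x2) = 0 ->
      Phi *m x1 = Phi *m x2 -> x1 = x2) ->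
  forall x : 'cV[R]_N,
    is_minimizer (objective Phi L nA y lambda) x -> x = xs.
Proof.
move=> hn lambda_gt0 xs_min dec sepVW [eta [alpha [alpha_sub [alpha_eta alphaV]]]] injV x x_min.
have [fit nA_eq] := minimizer_fit hn lambda_gt0 x_min xs_min.
have projV_eq0 := tight_subgradient_projV_eq0 hn dec sepVW alpha_sub alphaV.
apply: injV (fit); apply: projV_eq0.
- exact: (certificate_tight hn alpha_sub alpha_eta fit nA_eq).
- exact: (subdiff_norm_eq hn alpha_sub).
Qed.
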